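(* Under the setting and assumptions of the previous statement (symmetric positive definite $A_1,A_2$ with spectra in $[\alpha_1,\beta_1]$, $[\alpha_2,\beta_2]$; level-$h$ block-diagonal parts $A_i^{(h)}$, $h=0,\dots,\ell$; matrices $\widetilde X^{(\ell)},\delta\widetilde X^{(h)}$ with $\|R^{(\ell)}\|_F\le\epsilon\|B\|_F$ and $\|R^{(h)}\|_F\le\epsilon\|\widetilde\Xi^{(h)}\|_F$), with $\kappa=\frac{\beta_1+\beta_2}{\alpha_1+\alpha_2}$ and the additional constraint $\kappa\epsilon<\frac{2}{\ell}$, the matrix $\widetilde X:=\widetilde X^{(0)}=\widetilde X^{(\ell)}+\delta\widetilde X^{(\ell-1)}+\dots+\delta\widetilde X^{(0)}$ satisfies $$\|A_1\widetilde X+\widetilde XA_2-B\|_F\le(\ell+1)^2\kappa\epsilon\|B\|_F.$$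
   Context: For $i=1,2$, fix nested partitions of $\{1,\dots,n_i\}$ into contiguous index sets at levels $h=0,\dots,\ell$ (level $0$ trivial, each level obtained by splitting each set of the previous level into two contiguous parts). $A_i^{(h)}$ is the block-diagonal matrix keeping the entries of $A_i$ with row and column indices in the same level-$h$ set (so $A_i^{(0)}=A_i$). Given $B\in\mathbb R^{n_1\times n_2}$ and matrices $\widetilde X^{(\ell)}$, $\delta\widetilde X^{(h)}$ ($h=\ell-1,\dots,0$): $R^{(\ell)}:=A_1^{(\ell)}\widetilde X^{(\ell)}+\widetilde X^{(\ell)}A_2^{(\ell)}-B$; $\widetilde X^{(h+1)}:=\widetilde X^{(\ell)}+\delta\widetilde X^{(\ell-1)}+\dots+\delta\widetilde X^{(h+1)}$; $\widetilde\Xi^{(h)}:=-(A_1^{(h)}-A_1^{(h+1)})\widetilde X^{(h+1)}-\widetilde X^{(h+1)}(A_2^{(h)}-A_2^{(h+1)})$; $R^{(h)}:=A_1^{(h)}\delta\widetilde X^{(h)}+\delta\widetilde X^{(h)}A_2^{(h)}-\widetilde\Xi^{(h)}$. $\|\cdot\|_F$ is the Frobenius norm. *)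

From HB Require Import structures.
From mathcomp Require Import all_boot all_order all_algebra.
Set Implicit Arguments. Unset Strict Implicit. Unset Printing Implicit Defensive.
Import Order.TTheory GRing.Theory Num.Theory.
Local Open Scope ring_scope.

Definition frob (R : rcfType) (m n : nat) (A : 'M[R]_(m, n)) : R :=
  Num.sqrt (\sum_(i < m) \sum_(j < n) A i j ^+ 2).

Definition spd (R : rcfType) (n : nat) (A : 'M[R]_n) : Prop :=
  A^T = A /\ forall v : 'cV[R]_n, v != 0 -> 0 < (v^T *m A *m v) 0 0.

Definition spectrum_in (R : rcfType) (n : nat) (A : 'M[R]_n) (a b : R) : Prop :=
  forall x : R, eigenvalue A x -> a <= x <= b.

(* Nested partitions of {0,..,n-1} into contiguous index sets, levels 0..l.
   s h i j  means "i and j lie in the same level-h set". *)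
Definition nested_partition (n l : nat) (s : nat -> 'I_n -> 'I_n -> bool) : Prop :=
  [/\
      (forall h, (h <= l)%N ->
         [/\ (forall i, s h i i),
             (forall i j, s h i j -> s h j i) &
             (forall i j k, s h i j -> s h j k -> s h i k)]),
      (forall i j, s 0%N i j),
      (forall h, (h <= l)%N -> forall i j k : 'I_n,
          (i <= j)%N -> (j <= k)%N -> s h i k -> s h i j) &
      (* each level-h set is split into exactly two (nonempty) level-(h+1) sets *)
      (forall h, (h < l)%N ->
          [/\ (forall i j, s h.+1 i j -> s h i j),
              (forall i, exists j, s h i j && ~~ s h.+1 i j) &
              (forall i j k, s h i j -> s h i k ->
                  [|| s h.+1 i j, s h.+1 i k | s h.+1 j k])])].

Definition blockpart (R : rcfType) (n : nat) (s : nat -> 'I_n -> 'I_n -> bool)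
  (h : nat) (A : 'M[R]_n) : 'M[R]_n :=
  \matrix_(i, j) (if s h i j then A i j else 0).

Section Iter.
Variables (R : rcfType) (n1 n2 l : nat).
Variables (s1 : nat -> 'I_n1 -> 'I_n1 -> bool) (s2 : nat -> 'I_n2 -> 'I_n2 -> bool).
Variables (A1 : 'M[R]_n1) (A2 : 'M[R]_n2) (Xl : 'M[R]_(n1, n2)) (dX : nat -> 'M[R]_(n1, n2)).

Definition Xt (h : nat) : 'M[R]_(n1, n2) := Xl + \sum_(h <= k < l) dX k.

Definition Xi (h : nat) : 'M[R]_(n1, n2) :=
  - ((blockpart s1 h A1 - blockpart s1 h.+1 A1) *m Xt h.+1)
  - Xt h.+1 *m (blockpart s2 h A2 - blockpart s2 h.+1 A2).

Definition Rl : 'M[R]_(n1, n2) :=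
  blockpart s1 l A1 *m Xl + Xl *m blockpart s2 l A2.

Definition Rh (h : nat) : 'M[R]_(n1, n2) :=
  blockpart s1 h A1 *m dX h + dX h *m blockpart s2 h A2 - Xi h.
End Iter.

From HB Require Import structures.
From mathcomp Require Import all_boot all_order all_algebra.
From mathcomp Require Import complex spectral sesquilinear.
From mathcomp Require Import ring lra.
Import Order.TTheory GRing.Theory Num.Theory.
Set Implicit Arguments. Unset Strict Implicit. Unset Printing Implicit Defensive.
Local Open Scope ring_scope.

(* Write L_h X := A1^(h) X + X A2^(h) for the level-h Sylvester operator and
   r_h := |L_h X~^(h) - B|_F for the residual of the accumulated iterate.
   Since X~^(h) = X~^(h+1) + dX^(h), one has the exact splitting
   L_h X~^(h) - B = (L_(h+1) X~^(h+1) - B) + R^(h), and R^(h) is bounded by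
   eps |Xi^(h)|.  Two spectral facts control Xi^(h):
   - the off-diagonal part A^(h) - A^(h+1) has operator norm <= beta, because
     2 (A^(h) - A^(h+1)) = A^(h) - D A^(h) D for a +-1 signature matrix D,
     and both terms have Rayleigh quotients in [0, beta];
   - L_h is coercive with constant alpha1 + alpha2, since every level keeps
     the Rayleigh bounds of A (A^(h+1) is the average of A^(h) and D A^(h) D).
   Hence r_h <= (1 + kappa eps) r_(h+1) + kappa eps |B|, and r_l <= kappa eps |B|;
   unrolling gives r_0 <= ((1 + kappa eps)^(l+1) - 1) |B| <= (l+1)^2 kappa eps |B|
   when l kappa eps < 2. *)

Section FrobeniusInnerProduct.
Variable R : rcfType.

Definition fip m n (X Y : 'M[R]_(m, n)) : R := \tr (X^T *m Y).

Lemma fipE m n (X Y : 'M[R]_(m, n)) :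
  fip X Y = \sum_(i < m) \sum_(j < n) X i j * Y i j.
Proof.
rewrite /fip /mxtrace exchange_big; apply: eq_bigr => j _; rewrite mxE.
by apply: eq_bigr => i _; rewrite mxE.
Qed.

Lemma fipC m n (X Y : 'M[R]_(m, n)) : fip X Y = fip Y X.
Proof. by rewrite /fip -mxtrace_tr trmx_mul trmxK. Qed.

Lemma fipDr m n (X Y Z : 'M[R]_(m, n)) : fip X (Y + Z) = fip X Y + fip X Z.
Proof. by rewrite /fip mulmxDr mxtraceD. Qed.

Lemma fipZr m n (X Y : 'M[R]_(m, n)) c : fip X (c *: Y) = c * fip X Y.
Proof. by rewrite /fip -scalemxAr mxtraceZ. Qed.

Lemma fipNr m n (X Y : 'M[R]_(m, n)) : fip X (- Y) = - fip X Y.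
Proof. by rewrite -scaleN1r fipZr mulN1r. Qed.

Lemma fipBr m n (X Y Z : 'M[R]_(m, n)) : fip X (Y - Z) = fip X Y - fip X Z.
Proof. by rewrite fipDr fipNr. Qed.

Lemma fipDl m n (X Y Z : 'M[R]_(m, n)) : fip (Y + Z) X = fip Y X + fip Z X.
Proof. by rewrite fipC fipDr ![fip X _]fipC. Qed.

Lemma fipZl m n (X Y : 'M[R]_(m, n)) c : fip (c *: Y) X = c * fip Y X.
Proof. by rewrite fipC fipZr fipC. Qed.

Lemma fipNl m n (X Y : 'M[R]_(m, n)) : fip (- Y) X = - fip Y X.
Proof. by rewrite fipC fipNr fipC. Qed.

Lemma fipBl m n (X Y Z : 'M[R]_(m, n)) : fip (Y - Z) X = fip Y X - fip Z X.
Proof. by rewrite fipC fipBr ![fip X _]fipC. Qed.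

Lemma fip_mull m n (M : 'M[R]_m) (X Y : 'M[R]_(m, n)) :
  fip X (M *m Y) = fip (M^T *m X) Y.
Proof. by rewrite /fip trmx_mul trmxK mulmxA. Qed.

Lemma fip_tr m n (X Y : 'M[R]_(m, n)) : fip X^T Y^T = fip X Y.
Proof. by rewrite /fip trmxK mxtrace_mulC; apply: fipC. Qed.

Lemma fip_ge0 m n (X : 'M[R]_(m, n)) : 0 <= fip X X.
Proof.
by rewrite fipE; apply: sumr_ge0 => i _; apply: sumr_ge0 => j _; rewrite -expr2 sqr_ge0.
Qed.

Lemma fip_eq0 m n (X : 'M[R]_(m, n)) : fip X X = 0 -> X = 0.
Proof.
have sq_ge0 (x : R) : 0 <= x * x by rewrite -expr2 sqr_ge0.
rewrite fipE => /eqP; rewrite psumr_eq0 => [/allP Hrow|i _]; last exact: sumr_ge0.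
apply/matrixP => i j; move/(_ i (mem_index_enum _)): Hrow.
rewrite psumr_eq0 // => /allP/(_ j (mem_index_enum _)).
by rewrite -expr2 sqrf_eq0 mxE => /eqP.
Qed.

Lemma fip_CauchySchwarz m n (X Y : 'M[R]_(m, n)) :
  fip X Y ^+ 2 <= fip X X * fip Y Y.
Proof.
have [/fip_eq0 ->|nzY] := eqVneq (fip Y Y) 0.
  by rewrite /fip trmx0 mul0mx mulmx0 linear0 expr0n /= mulr0.
have Ypos : 0 < fip Y Y by rewrite lt_def nzY fip_ge0.
have := fip_ge0 (fip Y Y *: X - fip X Y *: Y).
rewrite !(fipBl, fipBr, fipZl, fipZr) [fip Y X]fipC => H.
have : 0 <= fip Y Y * (fip X X * fip Y Y - fip X Y ^+ 2) by nra.
by rewrite pmulr_rge0 // subr_ge0.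
Qed.

Lemma frobE m n (X : 'M[R]_(m, n)) : frob X = Num.sqrt (fip X X).
Proof.
by rewrite /frob fipE; congr Num.sqrt; apply: eq_bigr => i _;
  apply: eq_bigr => j _; rewrite expr2.
Qed.

Lemma frob_ge0 m n (X : 'M[R]_(m, n)) : 0 <= frob X.
Proof. exact: sqrtr_ge0. Qed.

Lemma frob_sq m n (X : 'M[R]_(m, n)) : frob X ^+ 2 = fip X X.
Proof. by rewrite frobE sqr_sqrtr // fip_ge0. Qed.

Lemma frob_empty m n (X : 'M[R]_(m, n)) : (m == 0)%N || (n == 0)%N -> frob X = 0.
Proof.
case/orP=> /eqP z; rewrite /frob big1 ?sqrtr0 // => -[i lt_i] _.
  by suff : (i < 0)%N by []; rewrite -z.
by rewrite big1 // => -[j lt_j]; suff : (j < 0)%N by []; rewrite -z.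
Qed.

Lemma fip_le_frob m n (X Y : 'M[R]_(m, n)) : fip X Y <= frob X * frob Y.
Proof.
rewrite !frobE -sqrtrM ?fip_ge0 //; apply: le_trans (ler_norm _) _.
by rewrite -sqrtr_sqr ler_wsqrtr // fip_CauchySchwarz.
Qed.

Lemma frobD m n (X Y : 'M[R]_(m, n)) : frob (X + Y) <= frob X + frob Y.
Proof.
have H : fip (X + Y) (X + Y) <= (frob X + frob Y) ^+ 2.
  rewrite fipDl !fipDr -!frob_sq [fip Y X]fipC.
  by have := fip_le_frob X Y; nra.
rewrite frobE; apply: le_trans (ler_wsqrtr H) _.
by rewrite sqrtr_sqr ger0_norm // addr_ge0 ?frob_ge0.
Qed.

Lemma frobN m n (X : 'M[R]_(m, n)) : frob (- X) = frob X.
Proof. by rewrite !frobE fipNr fipC fipNr opprK. Qed.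

Lemma frobB m n (X Y : 'M[R]_(m, n)) : frob (X - Y) <= frob X + frob Y.
Proof. by rewrite -(frobN Y) frobD. Qed.

Lemma frob_tr m n (X : 'M[R]_(m, n)) : frob X^T = frob X.
Proof. by rewrite !frobE fip_tr. Qed.

Lemma frob_le m n p r (X : 'M[R]_(m, n)) (Y : 'M[R]_(p, r)) c : 0 <= c ->
  fip Y Y <= c ^+ 2 * fip X X -> frob Y <= c * frob X.
Proof.
move=> c_ge0 H; rewrite !frobE -(ger0_norm c_ge0) -sqrtr_sqr -sqrtrM ?sqr_ge0 //.
exact: ler_wsqrtr.
Qed.

Lemma frob_coercive m n (X Y : 'M[R]_(m, n)) c : 0 <= c ->
  c * fip X X <= fip X Y -> c * frob X <= frob Y.
Proof.
move=> c_ge0 H; have [->|nzX] := eqVneq (frob X) 0; first by rewrite mulr0 frob_ge0.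
have Xpos : 0 < frob X by rewrite lt_def nzX frob_ge0.
rewrite -(ler_pM2r Xpos) -mulrA -expr2 frob_sq [frob Y * _]mulrC.
by apply: le_trans H _; rewrite fip_le_frob.
Qed.

End FrobeniusInnerProduct.

Section Rayleigh.
Variable R : rcfType.

Definition rayleigh n (M : 'M[R]_n) (a b : R) : Prop :=
  forall m (X : 'M[R]_(n, m)), a * fip X X <= fip X (M *m X) <= b * fip X X.

Lemma rayleigh_le n (M : 'M[R]_n) a b : (0 < n)%N -> rayleigh M a b -> a <= b.
Proof.
move=> n_gt0 rM; pose X : 'M[R]_(n, 1) := const_mx 1.
have Xpos : 0 < fip X X.
  rewrite lt_def fip_ge0 andbT; apply/eqP => /fip_eq0/matrixP/(_ (Ordinal n_gt0) 0).
  by rewrite !mxE; apply/eqP; exact: oner_neq0.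
by have /andP[lo hi] := rM _ X; rewrite -(ler_pM2r Xpos) (le_trans lo hi).
Qed.

Lemma rayleigh_widen n (M : 'M[R]_n) a a' b :
  a' <= a -> rayleigh M a b -> rayleigh M a' b.
Proof.
move=> le_a rM m X; have /andP[lo ->] := rM m X; rewrite andbT.
by apply: le_trans lo; rewrite ler_wpM2r ?fip_ge0.
Qed.

Lemma rayleigh_right n (M : 'M[R]_n) a b : M^T = M -> rayleigh M a b ->
  forall m (X : 'M[R]_(m, n)), a * fip X X <= fip X (X *m M) <= b * fip X X.
Proof.
move=> Ms rM m X.
by rewrite -[fip X (X *m M)]fip_tr -[fip X X]fip_tr trmx_mul Ms; apply: rM.
Qed.

Lemma rayleigh_sign n (M D : 'M[R]_n) a b : D^T = D -> D *m D = 1%:M ->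
  rayleigh M a b -> rayleigh (D *m M *m D) a b.
Proof.
move=> DT DD rM m X.
have -> : fip X (D *m M *m D *m X) = fip (D *m X) (M *m (D *m X)).
  by rewrite -!mulmxA fip_mull DT.
have -> : fip X X = fip (D *m X) (D *m X) by rewrite fip_mull DT mulmxA DD mul1mx.
exact: rM.
Qed.

Lemma rayleigh_average n (M M1 M2 : 'M[R]_n) a b : M *+ 2 = M1 + M2 ->
  rayleigh M1 a b -> rayleigh M2 a b -> rayleigh M a b.
Proof.
move=> hM r1 r2 m X.
have e : fip X (M *m X) *+ 2 = fip X (M1 *m X) + fip X (M2 *m X).
  by rewrite -fipDr -mulmxDl -hM !mulr2n mulmxDl fipDr.
have /andP[lo1 hi1] := r1 m X; have /andP[lo2 hi2] := r2 m X.
by move: e; rewrite mulr2n => e; apply/andP; split; lra.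
Qed.

Lemma rayleigh_half_diff n (E M1 M2 : 'M[R]_n) b : E *+ 2 = M1 - M2 ->
  rayleigh M1 0 b -> rayleigh M2 0 b -> rayleigh E (- b) b.
Proof.
move=> hE r1 r2 m X.
have e : fip X (E *m X) *+ 2 = fip X (M1 *m X) - fip X (M2 *m X).
  by rewrite -fipBr -mulmxBl -hE !mulr2n mulmxDl fipDr.
have /andP[lo1 hi1] := r1 m X; have /andP[lo2 hi2] := r2 m X.
rewrite mul0r in lo1 lo2; move: e; rewrite mulr2n mulNr => e.
by apply/andP; split; lra.
Qed.

(* Polarization: a symmetric E whose Rayleigh quotients lie in [-c, c] has
   operator norm at most c, i.e. |E X| <= c |X|. *)
Lemma rayleigh_norm_bound n (E : 'M[R]_n) c : E^T = E -> 0 <= c ->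
  rayleigh E (- c) c -> forall m (X : 'M[R]_(n, m)), frob (E *m X) <= c * frob X.
Proof.
move=> Es c_ge0 rE m X; apply: frob_le => //; set U := E *m X.
have polar t : fip (U + t *: X) (E *m (U + t *: X))
    - fip (U - t *: X) (E *m (U - t *: X)) = 4%:R * t * fip U U.
  have EU : fip X (E *m U) = fip U U by rewrite fip_mull Es fipC.
  rewrite mulmxDr mulmxBr -scalemxAr -/U.
  rewrite !(fipDl, fipDr, fipBl, fipBr, fipZl, fipZr, fipNl, fipNr) EU; ring.
have parallelogram t : fip (U + t *: X) (U + t *: X) + fip (U - t *: X) (U - t *: X)
    = 2%:R * fip U U + 2%:R * t ^+ 2 * fip X X.
  rewrite !(fipDl, fipDr, fipBl, fipBr, fipZl, fipZr, fipNl, fipNr) [fip X U]fipC; ring.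
have polar_bound t : 4%:R * t * fip U U <= c * (2%:R * fip U U + 2%:R * t ^+ 2 * fip X X).
  have /andP[_ hi] := rE _ (U + t *: X); have /andP[lo _] := rE _ (U - t *: X).
  rewrite -polar -parallelogram mulrDr; lra.
have UU := fip_ge0 U; have XX := fip_ge0 X.
have [c0|c_neq0] := eqVneq c 0.
  by have := polar_bound 1; rewrite c0 expr0n /= !mul0r; lra.
have cpos : 0 < c by rewrite lt_def c_neq0 c_ge0.
by rewrite -(ler_pM2l cpos); have := polar_bound c; nra.
Qed.

End Rayleigh.

Section UnitaryDiagonal.
Variable C : numClosedFieldType.
Local Open Scope sesquilinear_scope.

Lemma trace_conj_form n m (Y W : 'M[C]_(n, m)) :
  \tr (Y^t* *m W) = \sum_(i < n) \sum_(j < m) (Y i j)^* * W i j.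
Proof.
rewrite /mxtrace exchange_big; apply: eq_bigr => j _; rewrite mxE.
by apply: eq_bigr => i _; rewrite !mxE.
Qed.

Lemma eigenvalue_diagonalization n (M P : 'M[C]_n) (d : 'rV[C]_n) k :
  P \in unitmx -> M = invmx P *m diag_mx d *m P -> eigenvalue M (d 0 k).
Proof.
move=> Pu ->; apply/eigenvalueP; exists (row k P).
  rewrite -row_mul !mulmxA mulmxV // mul1mx mul_diag_mx.
  by apply/rowP => j; rewrite !mxE.
apply/negP => /eqP rowk0.
have : row k P *m invmx P = 0 by rewrite rowk0 mul0mx.
rewrite rowE mulmxK // => /matrixP /(_ 0 k); rewrite !mxE !eqxx /=.
by move/eqP; rewrite oner_eq0.
Qed.

Lemma unitary_diagonal_bounds n m (P : 'M[C]_n) (d : 'rV[C]_n) (Z : 'M[C]_(n, m)) c :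
  P \is unitarymx ->
  ((forall k, c <= d 0 k) ->
     c * \tr (Z^t* *m Z) <= \tr (Z^t* *m (P^t* *m diag_mx d *m P *m Z))) /\
  ((forall k, d 0 k <= c) ->
     \tr (Z^t* *m (P^t* *m diag_mx d *m P *m Z)) <= c * \tr (Z^t* *m Z)).
Proof.
move=> Pu; have PtP : P^t* *m P = 1%:M by apply: mulmx1C; apply/unitarymxP.
have -> : Z^t* *m Z = (P *m Z)^t* *m (P *m Z).
  by rewrite trmx_mul map_mxM !mulmxA -[_ *m _ *m P]mulmxA PtP mulmx1.
have -> : Z^t* *m (P^t* *m diag_mx d *m P *m Z) = (P *m Z)^t* *m (diag_mx d *m (P *m Z)).
  by rewrite trmx_mul map_mxM !mulmxA.
move: (P *m Z) => Y.
split=> Hc; rewrite !trace_conj_form mulr_sumr; apply: ler_sum => i _;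
  rewrite mulr_sumr; apply: ler_sum => j _;
  rewrite mul_diag_mx mxE (mulrCA _ (d 0 i)) ler_wpM2r ?Hc //;
  by rewrite mulrC mul_conjC_ge0.
Qed.

End UnitaryDiagonal.

Section SpectralBounds.
Variable R : rcfType.
Local Notation C := (R[i]).
Local Notation toC := (real_complex R).
Local Open Scope sesquilinear_scope.

Lemma toC_conj (x : R) : (toC x)^* = toC x.
Proof. by apply: conj_Creal; apply/complex_realP; exists x. Qed.

Lemma eigenvalue_toC n (A : 'M[R]_n) x :
  eigenvalue (map_mx toC A) (toC x) = eigenvalue A x.
Proof. by rewrite !eigenvalue_root_char -map_char_poly fmorph_root. Qed.

Lemma toC_fip n m (Y Z : 'M[R]_(n, m)) :
  toC (fip Y Z) = \tr ((map_mx toC Y)^t* *m map_mx toC Z).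
Proof.
rewrite /fip /mxtrace rmorph_sum; apply: eq_bigr => i _.
rewrite !mxE rmorph_sum; apply: eq_bigr => j _.
by rewrite !mxE rmorphM toC_conj.
Qed.

(* Spectral theorem: a symmetric matrix with spectrum in [a, b] has all its
   Rayleigh quotients in [a, b]. *)
Lemma rayleigh_spectrum n (A : 'M[R]_n) a b :
  A^T = A -> spectrum_in A a b -> rayleigh A a b.
Proof.
move=> Asym Aspec m X.
have herm : map_mx toC A \is hermsymmx.
  apply/is_hermitianmxP; rewrite expr0 scale1r; apply/matrixP => i j.
  by rewrite !mxE toC_conj -{1}Asym mxE.
have /orthomx_spectralP Adiag := hermitian_normalmx herm.
move: Adiag (spectral_unitarymx (map_mx toC A)) (hermitian_spectral_diag_real herm).
move: (spectralmx _) (spectral_diag _) => P d Adiag Pu dreal.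
have dbound k : toC a <= d 0 k <= toC b.
  have dk : d 0 k \is Num.real by exact: (mxOverP dreal).
  have : eigenvalue A (complex.Re (d 0 k)).
    rewrite -eigenvalue_toC RRe_real //.
    exact: eigenvalue_diagonalization (unitarymx_unit Pu) Adiag.
  by move/Aspec; rewrite -(RRe_real dk) !lecR.
have AX : toC (fip X (A *m X)) =
    \tr ((map_mx toC X)^t* *m (P^t* *m diag_mx d *m P *m map_mx toC X)).
  by rewrite toC_fip map_mxM Adiag (invmx_unitary Pu).
have [lo _] := unitary_diagonal_bounds d (map_mx toC X) (toC a) Pu.
have [_ hi] := unitary_diagonal_bounds d (map_mx toC X) (toC b) Pu.
apply/andP; split; rewrite -lecR rmorphM /= AX toC_fip.
  by apply: lo => k; case/andP: (dbound k).
by apply: hi => k; case/andP: (dbound k).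
Qed.

End SpectralBounds.

Lemma class_representative (T : finType) (e : T -> T -> bool) :
  (forall i, e i i) -> (forall i j, e i j -> e j i) ->
  (forall i j k, e i j -> e j k -> e i k) ->
  exists2 rep : T -> T, (forall i, e i (rep i)) & (forall i j, e i j -> rep i = rep j).
Proof.
move=> e_refl e_sym e_trans; exists (fun i => odflt i [pick j | e i j]).
  by move=> i; case: pickP => [j //|/(_ i)]; rewrite e_refl.
move=> i j eij; have -> : [pick k | e i k] = [pick k | e j k].
  by apply: eq_pick => k /=; apply/idP/idP; [apply: e_trans; apply: e_sym | apply: e_trans].
by case: pickP => [//|/(_ j)]; rewrite e_refl.
Qed.

Section Levels.
Variables (R : rcfType) (n l : nat) (s : nat -> 'I_n -> 'I_n -> bool).
Hypothesis np : nested_partition l s.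

Lemma blockpart0 (A : 'M[R]_n) : blockpart s 0 A = A.
Proof. by case: np => _ s0 _ _; apply/matrixP => i j; rewrite mxE s0. Qed.

Lemma blockpart_sym h (A : 'M[R]_n) :
  (h <= l)%N -> A^T = A -> (blockpart s h A)^T = blockpart s h A.
Proof.
case: np => equiv _ _ _ hl As; have [_ sym _] := equiv h hl.
apply/matrixP => i j; rewrite !mxE.
have -> : s h j i = s h i j by apply/idP/idP; apply: sym.
by rewrite -{1}As mxE.
Qed.

Lemma same_half h (rep : 'I_n -> 'I_n) : (h < l)%N ->
  (forall i, s h i (rep i)) -> (forall i j, s h i j -> rep i = rep j) ->
  forall i j, s h i j -> s h.+1 i j = (s h.+1 i (rep i) == s h.+1 j (rep j)).
Proof.
case: np => equiv _ _ split hl srep rep_eq i j sij.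
have [_ sym _] := equiv h (ltnW hl); have [_ sym1 trans1] := equiv h.+1 hl.
have [_ _ three] := split h hl.
rewrite -(rep_eq _ _ sij); set r := rep i.
have sjr : s h j r by rewrite /r (rep_eq _ _ sij).
case ei: (s h.+1 i r); case ej: (s h.+1 j r) => /=.
- exact: trans1 ei (sym1 _ _ ej).
- by apply/negP => hij; move: ej; rewrite (trans1 _ _ _ (sym1 _ _ hij) ei).
- by apply/negP => hij; move: ei; rewrite (trans1 _ _ _ hij ej).
- have := three _ _ _ (sym _ _ (srep i)) (sym _ _ sjr).
  by case/or3P => // /sym1; rewrite ?ei ?ej.
Qed.

(* Halving: A^(h+1) is the average of A^(h) and its conjugate by the signature
   matrix D that is +1 on one half and -1 on the other half of each level-h set. *)
Lemma blockpart_halve h (A : 'M[R]_n) : (h < l)%N ->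
  exists D : 'M[R]_n, [/\ D^T = D, D *m D = 1%:M &
    blockpart s h.+1 A *+ 2 = blockpart s h A + D *m blockpart s h A *m D].
Proof.
move=> hl; have [equiv _ _ split] := np.
have [refl sym trans] := equiv h (ltnW hl); have [refine _ _] := split h hl.
have [rep srep rep_eq] := class_representative refl sym trans.
pose d := \row_i (if s h.+1 i (rep i) then 1 else -1 : R).
exists (diag_mx d); split; first exact: tr_diag_mx.
  apply/matrixP => i j; rewrite mul_diag_mx !mxE.
  by case: (s h.+1 i (rep i)); case: (i == j); rewrite /= ?mulr1n ?mulr0n ?mulr0 ?mulrNN ?mulr1.
apply/matrixP => i j; rewrite mul_mx_diag mul_diag_mx !mxE.
case sij: (s h i j); last first.
  have -> : s h.+1 i j = false by apply/negP => /refine; rewrite sij.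
  by rewrite /=; ring.
rewrite (same_half hl srep rep_eq sij).
by case: (s h.+1 i (rep i)); case: (s h.+1 j (rep j)); rewrite /=; ring.
Qed.

Lemma blockpart_rayleigh h (A : 'M[R]_n) a b :
  (h <= l)%N -> rayleigh A a b -> rayleigh (blockpart s h A) a b.
Proof.
move=> + rA; elim: h => [|h IH] hl; first by rewrite blockpart0.
have [D [DT DD halve]] := blockpart_halve A hl.
have rB := IH (ltnW hl).
exact: rayleigh_average halve rB (rayleigh_sign DT DD rB).
Qed.

Lemma blockpart_diff_bound h (A : 'M[R]_n) b :
  (h < l)%N -> A^T = A -> rayleigh A 0 b -> 0 <= b ->
  forall m (X : 'M[R]_(n, m)),
    frob ((blockpart s h A - blockpart s h.+1 A) *m X) <= b * frob X.
Proof.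
move=> hl As rA b_ge0; have [D [DT DD halve]] := blockpart_halve A hl.
have rB := blockpart_rayleigh (ltnW hl) rA.
apply: rayleigh_norm_bound b_ge0 _.
  by rewrite linearB /= !blockpart_sym // ltnW.
apply: (rayleigh_half_diff _ rB (rayleigh_sign DT DD rB)).
by rewrite mulrnBl halve mulr2n opprD addrA addrK.
Qed.

End Levels.

Section ScalarBounds.
Variable R : rcfType.

Lemma geometric_accumulation (r : nat -> R) (l : nat) (q c : R) :
  0 <= q -> r l <= q * c ->
  (forall h, (h < l)%N -> r h <= (1 + q) * r h.+1 + q * c) ->
  r 0%N <= ((1 + q) ^+ l.+1 - 1) * c.
Proof.
move=> q_ge0 base step.
suff bound k : (k <= l)%N -> r (l - k)%N <= ((1 + q) ^+ k.+1 - 1) * c.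
  by have := bound l (leqnn l); rewrite subnn.
elim: k => [|k IH] hk; first by rewrite subn0 expr1 addrAC subrr add0r.
have lt_lk : (l - k.+1 < l)%N by rewrite ltn_subrL (leq_ltn_trans (leq0n k) hk).
have := step _ lt_lk; rewrite subnSK // => st.
have q1_ge0 : 0 <= 1 + q by lra.
have := ler_wpM2l q1_ge0 (IH (ltnW hk)).
by rewrite [(1 + q) ^+ k.+2]exprS; move: st; set P := (1 + q) ^+ k.+1; lra.
Qed.

Lemma binomial_bound (q : R) (l : nat) : 0 <= q -> l%:R * q < 2 ->
  (1 + q) ^+ l.+1 - 1 <= (l.+1)%:R ^+ 2 * q.
Proof.
move=> q_ge0 small.
suff bound k : (k <= l.+1)%N -> (1 + q) ^+ k <= 1 + k%:R ^+ 2 * q.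
  by have := bound _ (leqnn _); lra.
elim: k => [|k IH] hk.
  by rewrite expr0 lerDl mulr_ge0 ?sqr_ge0.
have q1_ge0 : 0 <= 1 + q by lra.
have := ler_wpM2l q1_ge0 (IH (ltnW hk)).
rewrite -exprS => /le_trans; apply; rewrite -natr1.
have kq_le : k%:R * q <= l%:R * q by rewrite ler_wpM2r // ler_nat.
have kq_ge0 : 0 <= k%:R * q by rewrite mulr_ge0 ?ler0n.
have : 0 <= (k%:R * q) * (2 - k%:R * q) by rewrite mulr_ge0 //; lra.
by move: kq_le kq_ge0; set x : R := k%:R; nra.
Qed.

End ScalarBounds.

Section SylvesterOperator.
Variable R : rcfType.

Definition sylvester m n (A1 : 'M[R]_m) (A2 : 'M[R]_n) (X : 'M[R]_(m, n)) :
  'M[R]_(m, n) := A1 *m X + X *m A2.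

Lemma sylvester_coercive m n (A1 : 'M[R]_m) (A2 : 'M[R]_n) a1 b1 a2 b2 :
  rayleigh A1 a1 b1 -> A2^T = A2 -> rayleigh A2 a2 b2 -> 0 <= a1 + a2 ->
  forall X : 'M[R]_(m, n), (a1 + a2) * frob X <= frob (sylvester A1 A2 X).
Proof.
move=> r1 A2s r2 a_ge0 X; apply: frob_coercive a_ge0 _.
rewrite fipDr mulrDl lerD //; first by have /andP[] := r1 _ X.
by have /andP[] := rayleigh_right A2s r2 X.
Qed.

End SylvesterOperator.

Lemma Xt_step (R : rcfType) n1 n2 l (Xl : 'M[R]_(n1, n2)) dX h : (h < l)%N ->
  Xt l Xl dX h = Xt l Xl dX h.+1 + dX h.
Proof. by move=> hl; rewrite /Xt big_ltn // [dX h + _]addrC addrA. Qed.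

Section ResidualEstimate.
Variables (R : rcfType) (n1 n2 l : nat).
Variables (s1 : nat -> 'I_n1 -> 'I_n1 -> bool) (s2 : nat -> 'I_n2 -> 'I_n2 -> bool).
Variables (A1 : 'M[R]_n1) (A2 : 'M[R]_n2) (al1 be1 al2 be2 eps : R).
Variables (B Xl : 'M[R]_(n1, n2)) (dX : nat -> 'M[R]_(n1, n2)).
Hypotheses (np1 : nested_partition l s1) (np2 : nested_partition l s2).
Hypotheses (A1sym : A1^T = A1) (A2sym : A2^T = A2).
Hypotheses (ray1 : rayleigh A1 al1 be1) (ray2 : rayleigh A2 al2 be2).
Hypotheses (al1_gt0 : 0 < al1) (al2_gt0 : 0 < al2).
Hypotheses (al_be1 : al1 <= be1) (al_be2 : al2 <= be2) (eps_ge0 : 0 <= eps).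
Hypothesis res_top : frob (Rl l s1 s2 A1 A2 Xl - B) <= eps * frob B.
Hypothesis res_level : forall h, (h < l)%N ->
  frob (Rh l s1 s2 A1 A2 Xl dX h) <= eps * frob (Xi l s1 s2 A1 A2 Xl dX h).

Local Notation L h := (sylvester (blockpart s1 h A1) (blockpart s2 h A2)).
Local Notation X_ h := (Xt l Xl dX h).
Local Notation kappa := ((be1 + be2) / (al1 + al2)).
Local Notation res h := (frob (L h (X_ h) - B)).

Lemma kappa_ge1 : 1 <= kappa.
Proof. by rewrite ler_pdivlMr ?addr_gt0 // mul1r lerD. Qed.

Lemma residual_split h : (h < l)%N ->
  L h (X_ h) - B = (L h.+1 (X_ h.+1) - B) + Rh l s1 s2 A1 A2 Xl dX h.
Proof.
move=> hl; rewrite (Xt_step _ _ hl) /Rh /Xi /sylvester.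
rewrite !(mulmxDr, mulmxDl, mulmxN, mulNmx, mulmxBl, mulmxBr).
by apply/matrixP => i j; rewrite !mxE; ring.
Qed.

Lemma Xi_bound h : (h < l)%N ->
  frob (Xi l s1 s2 A1 A2 Xl dX h) <= (be1 + be2) * frob (X_ h.+1).
Proof.
move=> hl; rewrite /Xi; set Y := X_ h.+1.
have be1_ge0 : 0 <= be1 := ltW (lt_le_trans al1_gt0 al_be1).
have be2_ge0 : 0 <= be2 := ltW (lt_le_trans al2_gt0 al_be2).
have ray01 := rayleigh_widen (ltW al1_gt0) ray1.
have ray02 := rayleigh_widen (ltW al2_gt0) ray2.
apply: le_trans (frobB _ _) _; rewrite frobN mulrDl lerD //.
  exact: (blockpart_diff_bound np1 hl A1sym ray01 be1_ge0 Y).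
rewrite -frob_tr trmx_mul linearB /= !(blockpart_sym np2) ?(ltnW hl) // -(frob_tr Y).
exact: (blockpart_diff_bound np2 hl A2sym ray02 be2_ge0 Y^T).
Qed.

Lemma level_coercive h X : (h <= l)%N -> (al1 + al2) * frob X <= frob (L h X).
Proof.
move=> hl; apply: (sylvester_coercive (blockpart_rayleigh np1 hl ray1)).
- exact: (blockpart_sym np2 hl A2sym).
- exact: (blockpart_rayleigh np2 hl ray2).
- by rewrite addr_ge0 ?ltW.
Qed.

Lemma residual_step h : (h < l)%N ->
  res h <= (1 + kappa * eps) * res h.+1 + kappa * eps * frob B.
Proof.
move=> hl; rewrite (residual_split hl); set Y := X_ h.+1.
have kappa_ge0 : 0 <= kappa := le_trans ler01 kappa_ge1.
have XY : (be1 + be2) * frob Y <= kappa * (res h.+1 + frob B).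
  have -> : (be1 + be2) * frob Y = kappa * ((al1 + al2) * frob Y).
    by field; rewrite gt_eqF ?addr_gt0.
  rewrite ler_wpM2l // (le_trans (level_coercive Y hl)) //.
  by rewrite -{1}(subrK B (L h.+1 Y)) frobD.
have Rh_bound := le_trans (res_level hl) (ler_wpM2l eps_ge0 (le_trans (Xi_bound hl) XY)).
by apply: le_trans (frobD _ _) _; lra.
Qed.

Lemma residual_top : res l <= kappa * eps * frob B.
Proof.
rewrite /Xt big_geq // addr0; apply: le_trans res_top _.
by rewrite ler_wpM2r ?frob_ge0 // ler_peMl ?kappa_ge1.
Qed.

Lemma residual_bound : l%:R * (kappa * eps) < 2 ->
  res 0 <= (l.+1)%:R ^+ 2 * kappa * eps * frob B.
Proof.
move=> small; have q_ge0 : 0 <= kappa * eps by rewrite mulr_ge0 // (le_trans ler01 kappa_ge1).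
have := geometric_accumulation (r := fun h => res h) q_ge0 residual_top residual_step.
move/le_trans; apply.
rewrite -[_ * kappa * eps]mulrA ler_wpM2r ?frob_ge0 //.
exact: binomial_bound.
Qed.

End ResidualEstimate.

Theorem lemma3p2 (R : rcfType) (n1 n2 l : nat)
  (s1 : nat -> 'I_n1 -> 'I_n1 -> bool) (s2 : nat -> 'I_n2 -> 'I_n2 -> bool)
  (A1 : 'M[R]_n1) (A2 : 'M[R]_n2) (al1 be1 al2 be2 eps : R)
  (B Xl : 'M[R]_(n1, n2)) (dX : nat -> 'M[R]_(n1, n2)) :
  nested_partition l s1 -> nested_partition l s2 ->
  spd A1 -> spd A2 -> 0 < al1 -> 0 < al2 ->
  spectrum_in A1 al1 be1 -> spectrum_in A2 al2 be2 ->
  0 <= eps ->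
  frob (Rl l s1 s2 A1 A2 Xl - B) <= eps * frob B ->
  (forall h, (h < l)%N ->
     frob (Rh l s1 s2 A1 A2 Xl dX h) <= eps * frob (Xi l s1 s2 A1 A2 Xl dX h)) ->
  let kappa := (be1 + be2) / (al1 + al2) in
  l%:R * (kappa * eps) < 2 ->
  frob (A1 *m Xt l Xl dX 0 + Xt l Xl dX 0 *m A2 - B)
    <= ((l.+1)%:R ^+ 2) * kappa * eps * frob B.
Proof.
move=> np1 np2 [A1sym _] [A2sym _] al1_gt0 al2_gt0 spec1 spec2 eps_ge0 res_top res_level.
move=> kappa small.
have [n1_0|n1_gt0] := posnP n1; first by rewrite !frob_empty ?n1_0 ?mulr0.
have [n2_0|n2_gt0] := posnP n2; first by rewrite !frob_empty ?n2_0 ?orbT ?mulr0.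
have ray1 := rayleigh_spectrum A1sym spec1; have ray2 := rayleigh_spectrum A2sym spec2.
have := residual_bound np1 np2 A1sym A2sym ray1 ray2 al1_gt0 al2_gt0
  (rayleigh_le n1_gt0 ray1) (rayleigh_le n2_gt0 ray2) eps_ge0 res_top res_level small.
by rewrite /sylvester (blockpart0 np1) (blockpart0 np2).
Qed.
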